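(* Let $G$ be a finite simple graph with $n$ vertices and minimum degree $\delta$ satisfying $230 \le \delta \le 1{,}000$. Then $$\gamma_s(G) \le \frac{\sqrt{\ln(\delta+1)\,(18.16 - 1.4\ln\delta)} + 0.25}{\sqrt{\delta+1}}\, n.$$
   Context: For a vertex $v$ of $G$, $N[v]$ denotes the closed neighbourhood of $v$ (i.e. $v$ together with its neighbours). A signed domination function of $G$ is a function $f: V(G) \to \{-1, 1\}$ such that $\sum_{x \in N[v]} f(x) \ge 1$ for every vertex $v \in V(G)$. The weight of $f$ is $f(V(G)) = \sum_{v \in V(G)} f(v)$. The signed domination number $\gamma_s(G)$ is the minimum weight of a signed domination function of $G$. *)

From mathcomp Require Import all_boot all_order all_algebra.
Set Implicit Arguments. Unset Strict Implicit. Unset Printing Implicit Defensive.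
Import Order.TTheory GRing.Theory Num.Theory.

Definition simple_graph (T : finType) (e : rel T) : Prop :=
  symmetric e /\ irreflexive e.

Definition closed_nbhd (T : finType) (e : rel T) (v : T) : {set T} :=
  v |: [set u | e v u].

Definition degree (T : finType) (e : rel T) (v : T) : nat := #|[set u | e v u]|.

Definition is_min_degree (T : finType) (e : rel T) (delta : nat) : Prop :=
  (exists v, degree e v = delta) /\ (forall v, delta <= degree e v)%N.

Definition pm1 (T : finType) (f : {ffun T -> int}) : bool :=
  [forall v, (f v == 1%R) || (f v == (-1)%R)].

Definition weight (T : finType) (f : {ffun T -> int}) : int :=
  (\sum_(v : T) f v)%R.

Definition signed_dom_fun (T : finType) (e : rel T) (f : {ffun T -> int}) : bool :=
  pm1 f && [forall v, (1 <= \sum_(x in closed_nbhd e v) f x)%R].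

Definition is_signed_dom_number (T : finType) (e : rel T) (g : int) : Prop :=
  (exists f, signed_dom_fun e f /\ weight f = g) /\
  (forall f, signed_dom_fun e f -> (g <= weight f)%R).

From Stdlib Require Import Reals.
Definition int_to_R (z : int) : R :=
  match z with Posz n => INR n | Negz n => Ropp (INR (S n)) end.

(* Put every vertex independently into a random set S
   with probability p, and call v heavy when more than deg(v)/2 vertices of
   N[v] lie in S.  Removing from S the closed neighbourhoods of the heavy
   vertices leaves a set M such that -1 on M and +1 elsewhere is a signed
   dominating function, whence gamma_s <= n - 2|S| + 2 sum_{v heavy} (deg v + 1).
   For s >= 1 the indicator of "v heavy" is at most s^(2|N[v] & S|) / s^(deg v + 1),
   whose expectation is q^(deg v + 1) with q = (1 - p + p s^2) / s; as k q^k
   decreases for k >= delta + 1 once q (delta + 2) <= delta + 1, this gives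
   gamma_s <= n (1 - 2p + 2 (delta + 1) q^(delta + 1)).  The comparison with the
   stated bound is checked in exact rational arithmetic on four ranges of delta,
   each with its own p and s. *)

From mathcomp Require Import all_boot all_order all_algebra zify.
From mathcomp Require Rstruct.
From Stdlib Require Reals QArith Qreals Qround Lra Lia.
Import Order.TTheory GRing.Theory Num.Theory.
Set Implicit Arguments. Unset Strict Implicit. Unset Printing Implicit Defensive.

Lemma card_bigcup_leq (T I : finType) (P : pred I) (A : I -> {set T}) :
  (#|\bigcup_(i | P i) A i| <= \sum_(i | P i) #|A i|)%N.
Proof.
elim/big_rec2: _ => [|i U n _ IH]; first by rewrite cards0.
by rewrite cardsU; lia.
Qed.

Lemma all_has_witness (T : Type) (a b : pred T) (s : seq T) :
  all a s -> has b s -> exists2 x, a x & b x.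
Proof.
elim: s => //= x s IHs /andP[ax /IHs all_s] /orP[bx | /all_s //].
by exists x.
Qed.

Section SignedDomination.
Variables (T : finType) (e : rel T).
Hypothesis e_simple : simple_graph e.

Lemma card_closed_nbhd v : #|closed_nbhd e v| = (degree e v).+1.
Proof. by case: e_simple => _ irr; rewrite cardsU1 inE irr. Qed.

(* [v] is heavy for [S] when giving the value -1 to all of [S] would violate
   the constraint at [v]. *)
Definition heavy (S : {set T}) (v : T) : bool :=
  (degree e v < 2 * #|closed_nbhd e v :&: S|)%N.

Definition repair (S : {set T}) : {set T} :=
  S :\: \bigcup_(v | heavy S v) closed_nbhd e v.

Definition sign_fun (M : {set T}) : {ffun T -> int} :=
  [ffun x => if x \in M then (-1)%R else 1%R].

Lemma sum_sign_fun (M A : {set T}) :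
  (\sum_(x in A) sign_fun M x = #|A :\: M|%:Z - #|A :&: M|%:Z)%R.
Proof.
rewrite (bigID (mem M)) /= addrC; congr (_ + _)%R.
  rewrite (eq_bigr (fun=> 1%R)) => [|x /andP[_ /negbTE xM]]; last by rewrite ffunE xM.
  by rewrite sumr_const natz; congr Posz; apply: eq_card => x; rewrite !inE andbC.
rewrite (eq_bigr (fun=> (-1)%R)) => [|x /andP[_ xM]]; last by rewrite ffunE xM.
by rewrite sumr_const mulNrn natz; congr (- Posz _)%R; apply: eq_card => x; rewrite !inE.
Qed.

Lemma weight_sign_fun (M : {set T}) : weight (sign_fun M) = (#|T|%:Z - 2 * #|M|%:Z)%R.
Proof.
rewrite /weight -(eq_bigl _ _ (in_set (fun=> true))) sum_sign_fun setTD setTI.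
by have := cardsC M; lia.
Qed.

Lemma repair_signed_dom_fun (S : {set T}) : signed_dom_fun e (sign_fun (repair S)).
Proof.
apply/andP; split; first by apply/forallP => x; rewrite ffunE; case: (x \in _).
apply/forallP => v; rewrite sum_sign_fun.
have := cardsID (repair S) (closed_nbhd e v); rewrite card_closed_nbhd.
case: (boolP (heavy S v)) => Sv.
  have -> : closed_nbhd e v :&: repair S = set0.
    apply/setP => x; rewrite in_setI in_setD in_set0.
    case: (boolP (x \in closed_nbhd e v)) => //= xN.
    suff -> : x \in \bigcup_(u | heavy S u) closed_nbhd e u by [].
    by apply/bigcupP; exists v.
  by rewrite cards0; lia.
move: Sv; rewrite /heavy -leqNgt => Sv.
have : (#|closed_nbhd e v :&: repair S| <= #|closed_nbhd e v :&: S|)%N.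
  by apply/subset_leq_card/setIS/subsetDl.
lia.
Qed.

Lemma signed_dom_number_le_heavy (g : int) (S : {set T}) :
  is_signed_dom_number e g ->
  (g <= #|T|%:Z - 2 * #|S|%:Z + 2 * (\sum_(v | heavy S v) (degree e v).+1)%N%:Z)%R.
Proof.
move=> [_ /(_ _ (repair_signed_dom_fun S))]; rewrite weight_sign_fun.
have : (#|S| <= #|repair S| + \sum_(v | heavy S v) (degree e v).+1)%N.
  rewrite cardsD -(eq_bigr _ (fun v _ => card_closed_nbhd v)).
  have := card_bigcup_leq (heavy S) (closed_nbhd e).
  have := subset_leq_card (subsetIr S (\bigcup_(v | heavy S v) closed_nbhd e v)).
  lia.
lia.
Qed.

End SignedDomination.

Section BernoulliSubsets.
Local Open Scope ring_scope.
Variables (R : comNzRingType) (T : finType) (p : R).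

Definition bernoulli_weight (F : {ffun T -> bool}) : R :=
  \prod_x (if F x then p else 1 - p).

Lemma sum_bernoulli_weight_prod (h : T -> bool -> R) :
  \sum_F bernoulli_weight F * \prod_x h x (F x) =
  \prod_x (p * h x true + (1 - p) * h x false).
Proof.
rewrite (eq_bigr (fun x => \sum_b (if b then p else 1 - p) * h x b)) => [|x _].
  by rewrite bigA_distr_bigA; apply: eq_bigr => F _; rewrite big_split.
by rewrite big_bool.
Qed.

Lemma sum_bernoulli_weight : \sum_F bernoulli_weight F = 1.
Proof.
have /= := sum_bernoulli_weight_prod (fun _ _ => 1).
rewrite (eq_bigr (fun F => bernoulli_weight F)) => [->|F _]; last by rewrite big1_eq mulr1.
by rewrite big1 // => x _; rewrite !mulr1 subrKC.
Qed.

Lemma sum_bernoulli_weight_card :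
  \sum_F bernoulli_weight F * #|[set x | F x]|%:R = #|T|%:R * p.
Proof.
have mark y : \sum_F bernoulli_weight F * (F y)%:R = p.
  transitivity (\sum_F bernoulli_weight F * \prod_x (if x == y then (F x)%:R else 1)).
    by apply: eq_bigr => F _; rewrite (bigD1 y) //= eqxx big1 ?mulr1 // => x /negbTE ->.
  rewrite (sum_bernoulli_weight_prod (fun x b => if x == y then b%:R else 1)).
  rewrite (bigD1 y) //= eqxx mulr1 mulr0 addr0 big1 ?mulr1 // => x /negbTE ->.
  by rewrite !mulr1 subrKC.
have card_marks (F : {ffun T -> bool}) : #|[set x | F x]|%:R = \sum_x (F x)%:R :> R.
  rewrite -sum1_card natr_sum [LHS]big_mkcond; apply: eq_bigr => x _.
  by rewrite inE; case: (F x).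
under eq_bigr => F _ do rewrite card_marks mulr_sumr.
by rewrite exchange_big /= (eq_bigr (fun=> p)) // sumr_const mulr_natl.
Qed.

Lemma sum_bernoulli_weight_expr (t : R) (A : {set T}) :
  \sum_F bernoulli_weight F * t ^+ #|A :&: [set x | F x]| = (1 - p + p * t) ^+ #|A|.
Proof.
have cnt (F : {ffun T -> bool}) :
    t ^+ #|A :&: [set x | F x]| = \prod_x (if (x \in A) && F x then t else 1).
  by rewrite -big_mkcond -prodr_const; apply: eq_bigl => x; rewrite !inE.
under eq_bigr => F _ do rewrite cnt.
rewrite (sum_bernoulli_weight_prod (fun x b => if (x \in A) && b then t else 1)).
rewrite -prodr_const [RHS]big_mkcond; apply: eq_bigr => x _.
by case: (x \in A); rewrite /= !mulr1 ?subrKC // addrC.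
Qed.

End BernoulliSubsets.

Section RandomBound.
Variables (R : realFieldType) (T : finType) (e : rel T).
Local Open Scope ring_scope.

Lemma natr_mul_expr_le (q : R) (a m : nat) :
  0 <= q -> q * a.+2%:R <= a.+1%:R -> (a < m)%N ->
  m%:R * q ^+ m <= a.+1%:R * q ^+ a.+1.
Proof.
move=> q_ge0 q_le lt_am.
pose u k := (a.+1 + k)%N%:R * q ^+ (a.+1 + k).
have u_step k : u k.+1 <= u k.
  rewrite /u addnS exprS mulrA ler_wpM2r ?exprn_ge0 //.
  rewrite -(ler_pM2r (ltr0Sn R a.+1)) -mulrA.
  apply: le_trans (ler_wpM2l (ler0n _ _) q_le) _.
  by rewrite -!natrM ler_nat; nia.
have := homo_leq (f := u) (r := fun x y => y <= x) lexx
  (fun _ _ _ h1 h2 => le_trans h2 h1) u_step (leq0n (m - a.+1)).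
by rewrite /u addn0 subnKC.
Qed.

Hypothesis e_simple : simple_graph e.

Lemma signed_dom_number_le_moment (g : int) (s : R) (S : {set T}) :
  is_signed_dom_number e g -> 1 <= s ->
  g%:~R <= #|T|%:R - 2 * #|S|%:R +
    2 * \sum_v (degree e v).+1%:R *
          ((s ^+ 2) ^+ #|closed_nbhd e v :&: S| / s ^+ (degree e v).+1).
Proof.
move=> /(signed_dom_number_le_heavy e_simple S) g_le s_ge1.
have s_gt0 : 0 < s by apply: lt_le_trans s_ge1.
rewrite -(ler_int R) !(intrD, intrM, intrN) rmorph1 sumMz in g_le.
apply: (le_trans g_le); rewrite lerD2l; apply: ler_wpM2l; first exact: addr_ge0.
rewrite big_mkcond /=.
apply: ler_sum => v _; case: ifP => [heavy_v | _]; last first.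
  by rewrite mulr_ge0 ?divr_ge0 ?exprn_ge0 ?ltW.
rewrite -[leLHS]mulr1 ler_wpM2l // ler_pdivlMr ?exprn_gt0 // mul1r -exprM.
by rewrite ler_weXn2l.
Qed.

Lemma signed_dom_number_le_bernoulli (g : int) (a : nat) (p s : R) :
  is_signed_dom_number e g -> (forall v, a <= degree e v)%N ->
  0 <= p <= 1 -> 1 <= s ->
  (1 - p + p * s ^+ 2) / s * a.+2%:R <= a.+1%:R ->
  g%:~R <= #|T|%:R * (1 - 2 * p + 2 * (a.+1%:R * ((1 - p + p * s ^+ 2) / s) ^+ a.+1)).
Proof.
move=> sdn deg_ge /andP[p_ge0 p_le1] s_ge1 q_le.
set q := (1 - p + p * s ^+ 2) / s in q_le *.
have s_gt0 : 0 < s by apply: lt_le_trans s_ge1.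
have q_ge0 : 0 <= q.
  apply: divr_ge0 (ltW s_gt0); apply: addr_ge0; first by rewrite subr_ge0.
  by rewrite mulr_ge0 ?sqr_ge0.
have w_ge0 (F : {ffun T -> bool}) : 0 <= bernoulli_weight p F.
  by apply: prodr_ge0 => x _; case: (F x); rewrite ?subr_ge0.
have -> : g%:~R = \sum_(F : {ffun T -> bool}) bernoulli_weight p F * g%:~R :> R.
  by rewrite -mulr_suml sum_bernoulli_weight mul1r.
apply: le_trans (ler_sum _ (fun F _ => ler_wpM2l (w_ge0 F)
  (signed_dom_number_le_moment [set x | F x] sdn s_ge1))) _.
under eq_bigr => F _ do
  rewrite mulrDr mulrBr [_ * (2 * _)]mulrCA [_ * (2 * (\sum_v _))]mulrCA mulr_sumr.
rewrite big_split sumrB /= -mulr_suml sum_bernoulli_weight mul1r -!mulr_sumr.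
rewrite sum_bernoulli_weight_card exchange_big /=.
rewrite mulrDr mulrBr mulr1 [_ * (2 * p)]mulrCA lerD2l [_ * (2 * _)]mulrCA ler_wpM2l //.
rewrite (mulr_natl (a.+1%:R * q ^+ a.+1) #|T|) -sumr_const; apply: ler_sum => v _.
rewrite (eq_bigr (fun F => (degree e v).+1%:R * (bernoulli_weight p F *
  (s ^+ 2) ^+ #|closed_nbhd e v :&: [set x | F x]|) / s ^+ (degree e v).+1)); last first.
  by move=> F _; rewrite mulrCA !mulrA.
rewrite -mulr_suml -mulr_sumr sum_bernoulli_weight_expr card_closed_nbhd // -mulrA -expr_div_n.
by apply: natr_mul_expr_le; rewrite // ltnS.
Qed.

End RandomBound.

Module CertifiedBounds.
Import Reals QArith Qreals Qround Lra Lia.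
Local Open Scope R_scope.

Definition gamma_bound (d : nat) : R :=
  (sqrt (ln (INR d + 1) * (18.16 - 1.4 * ln (INR d))) + 0.25) / sqrt (INR d + 1).

Lemma ln_le_ln (x y : R) : 0 < x -> x <= y -> ln x <= ln y.
Proof. by move=> x_gt0 [xy | <-]; [left; apply: ln_increasing | right]. Qed.

Lemma le_gamma_bound (a b d : nat) (la lb r sb K : R) :
  (0 < a <= d)%nat -> (d <= b)%nat ->
  la <= ln (INR a + 1) -> ln (INR b) <= lb -> 0 <= la -> 0 <= 18.16 - 1.4 * lb ->
  0 <= r -> r * r <= la * (18.16 - 1.4 * lb) ->
  0 <= sb -> INR b + 1 <= sb * sb -> K * sb <= r + 0.25 -> K <= gamma_bound d.
Proof.
move=> /andP[/ssrnat.leP a_gt0 /ssrnat.leP ad] /ssrnat.leP db la_le lb_ge la_ge0 c_ge0.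
move=> r_ge0 r2_le sb_ge0 sb2_ge K_le.
have [ad' db'] : INR a <= INR d <= INR b by split; apply: le_INR.
have d_gt0 : 0 < INR d by apply: lt_0_INR; lia.
have a_ge0 := pos_INR a.
have la_ln : la <= ln (INR d + 1) by apply: (Rle_trans _ _ _ la_le); apply: ln_le_ln; lra.
have ln_lb : ln (INR d) <= lb by apply: Rle_trans (ln_le_ln d_gt0 db') lb_ge.
have root_le : r <= sqrt (ln (INR d + 1) * (18.16 - 1.4 * ln (INR d))).
  rewrite -(sqrt_square r) //; apply: sqrt_le_1_alt.
  by apply: (Rle_trans _ _ _ r2_le); apply: Rmult_le_compat; lra.
have sqrt_le : sqrt (INR d + 1) <= sb.
  by rewrite -(sqrt_square sb) //; apply: sqrt_le_1_alt; lra.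
have sqrt_gt0 : 0 < sqrt (INR d + 1) by apply: sqrt_lt_R0; lra.
rewrite /gamma_bound; apply: (Rmult_le_reg_r _ _ _ sqrt_gt0).
rewrite /Rdiv Rmult_assoc Rinv_l ?Rmult_1_r; last lra.
have := sqrt_pos (ln (INR d + 1) * (18.16 - 1.4 * ln (INR d))).
case: (Rle_or_lt K 0) => [K_le0 | K_gt0]; first nra.
have : K * sqrt (INR d + 1) <= K * sb by apply: Rmult_le_compat_l; lra.
lra.
Qed.

Definition grid : positive := Pos.pow 2 80.

Definition round_down (x : Q) : Q := Qfloor (x * inject_Z (Zpos grid)) # grid.
Definition round_up (x : Q) : Q := Qceiling (x * inject_Z (Zpos grid)) # grid.

Lemma Q2R_grid_frac (z : Z) : Q2R (z # grid) = IZR z / IZR (Zpos grid).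
Proof. by []. Qed.

Lemma Q2R_inject_Z (z : Z) : Q2R (inject_Z z) = IZR z.
Proof. by rewrite /Q2R /=; field. Qed.

Lemma grid_gt0 : 0 < IZR (Zpos grid).
Proof. exact: IZR_lt. Qed.

Lemma le_div_grid (u x : R) : u <= x * IZR (Zpos grid) -> u / IZR (Zpos grid) <= x.
Proof.
move=> le_ux; have G := grid_gt0; apply: (Rmult_le_reg_r _ _ _ G).
by rewrite /Rdiv Rmult_assoc Rinv_l ?Rmult_1_r //; lra.
Qed.

Lemma ge_div_grid (u x : R) : x * IZR (Zpos grid) <= u -> x <= u / IZR (Zpos grid).
Proof.
move=> le_xu; have G := grid_gt0; apply: (Rmult_le_reg_r _ _ _ G).
by rewrite /Rdiv Rmult_assoc Rinv_l ?Rmult_1_r //; lra.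
Qed.

Lemma round_down_le (x : Q) : Q2R (round_down x) <= Q2R x.
Proof.
apply: le_div_grid; rewrite -[IZR (Zpos grid)]Q2R_inject_Z -Q2R_mult -Q2R_inject_Z.
exact/Qle_Rle/Qfloor_le.
Qed.

Lemma round_up_ge (x : Q) : Q2R x <= Q2R (round_up x).
Proof.
apply: ge_div_grid; rewrite -[IZR (Zpos grid)]Q2R_inject_Z -Q2R_mult -Q2R_inject_Z.
exact/Qle_Rle/Qle_ceiling.
Qed.

Lemma round_down_ge0 (x : Q) : 0 <= Q2R x -> 0 <= Q2R (round_down x).
Proof.
move=> x_ge0; rewrite /round_down Q2R_grid_frac; apply: ge_div_grid.
rewrite Rmult_0_l; apply: IZR_le; change 0%Z with (Qfloor 0); apply: Qfloor_resp_le.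
apply: Rle_Qle; rewrite Q2R_mult Q2R_inject_Z RMicromega.Q2R_0.
by apply: Rmult_le_pos => //; apply: Rlt_le grid_gt0.
Qed.

Fixpoint square_iter_down (k : nat) (r : Q) : Q :=
  if k is k'.+1 then square_iter_down k' (round_down (r * r)) else r.

Lemma square_iter_down_le (k : nat) (r : Q) (w : R) :
  0 <= Q2R r -> Q2R r <= exp w -> Q2R (square_iter_down k r) <= exp (w * 2 ^ k).
Proof.
elim: k r w => [|k IHk] r w r_ge0 r_le /=; first by rewrite Rmult_1_r.
rewrite (_ : w * (2 * 2 ^ k) = (w + w) * 2 ^ k); last by ring.
apply: IHk; first by apply: round_down_ge0; rewrite Q2R_mult; apply: Rmult_le_pos.
apply: Rle_trans (round_down_le _) _; rewrite Q2R_mult exp_plus.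
by apply: Rmult_le_compat.
Qed.

(* From [(1 + z / 2^30) ^ (2^30) <= exp z], evaluated with rounding down. *)
Definition exp_lower (z : Q) : Q :=
  let base := (1 + z / inject_Z (2 ^ 30))%Q in
  if Qle_bool 0 base then square_iter_down 30 base else 0%Q.

Lemma exp_lower_le (z : Q) : Q2R (exp_lower z) <= exp (Q2R z).
Proof.
rewrite /exp_lower; case: ifP => [base_ge0 | _]; last first.
  by rewrite RMicromega.Q2R_0; apply: Rlt_le; apply: exp_pos.
have P30 : IZR (2 ^ 30) = 2 ^ 30 by rewrite pow_IZR.
have P30_gt0 : 0 < 2 ^ 30 by apply: pow_lt; lra.
rewrite -[Q2R z](_ : Q2R z / 2 ^ 30 * 2 ^ 30 = Q2R z); last by field; lra.
apply: square_iter_down_le; first by rewrite -RMicromega.Q2R_0; apply: RMicromega.Qle_true.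
rewrite Q2R_plus Q2R_div ?Q2R_inject_Z ?P30 ?RMicromega.Q2R_1; last by [].
exact: exp_ineq1_le.
Qed.

Lemma ln_ge_exp_lower (x : R) (L : Q) :
  0 < x -> 1 <= x * Q2R (exp_lower (- L)) -> Q2R L <= ln x.
Proof.
move=> x_gt0 le1x; rewrite -[Q2R L]ln_exp; apply: ln_le_ln; first exact: exp_pos.
have := exp_lower_le (- L); rewrite Q2R_opp exp_Ropp => low.
have := Rmult_le_compat_l _ _ _ (Rlt_le _ _ x_gt0) low.
have := exp_pos (Q2R L); have := Rinv_r (exp (Q2R L)); nra.
Qed.

Lemma ln_le_exp_lower (x : R) (L : Q) :
  0 < x -> x <= Q2R (exp_lower L) -> ln x <= Q2R L.
Proof.
move=> x_gt0 le_x; rewrite -[Q2R L]ln_exp; apply: ln_le_ln => //.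
exact: Rle_trans le_x (exp_lower_le L).
Qed.

Fixpoint pow_up (q : Q) (m : nat) : Q :=
  if m is m'.+1 then round_up (q * pow_up q m') else 1%Q.

Lemma pow_up_ge (q : Q) (m : nat) : 0 <= Q2R q -> Q2R q ^ m <= Q2R (pow_up q m).
Proof.
move=> q_ge0; elim: m => [|m IHm] /=; first by rewrite RMicromega.Q2R_1; lra.
apply: Rle_trans (round_up_ge _); rewrite Q2R_mult.
exact: Rmult_le_compat_l.
Qed.

Lemma Q2R_2 : Q2R 2 = 2.
Proof. by rewrite /Q2R /=; field. Qed.

Lemma Q2R_of_nat (n : nat) : Q2R (inject_Z (Z.of_nat n)) = INR n.
Proof. by rewrite Q2R_inject_Z INR_IZR_INZ. Qed.

(* A certificate for the minimum degrees in [lo, hi]: the parameters [p], [s]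
   of the random construction and rational bounds [ln_lo <= ln (lo + 1)],
   [ln hi <= ln_hi], [root^2 <= ln_lo * (18.16 - 1.4 ln_hi)],
   [hi + 1 <= sqrt_hi^2] and [q ^ (lo + 1) <= pow_hi], [q = (1 - p + p s^2) / s]. *)
Record cert := Cert {
  cert_lo : nat; cert_hi : nat; cert_p : Q; cert_s : Q;
  cert_ln_lo : Q; cert_ln_hi : Q; cert_root : Q; cert_sqrt_hi : Q; cert_pow_hi : Q }.

Definition cert_ok (c : cert) : bool :=
  let: Cert a b p s la lb r sb pw := c in
  let a1 := (inject_Z (Z.of_nat a) + 1)%Q in
  let b' := inject_Z (Z.of_nat b) in
  let q := ((1 - p + p * (s * s)) / s)%Q in
  [&& (0 < a)%nat, Qle_bool 1 (a1 * exp_lower (- la)), Qle_bool b' (exp_lower lb),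
      Qle_bool 0 la, Qle_bool 0 (18.16 - 1.4 * lb), Qle_bool 0 r,
      Qle_bool (r * r) (la * (18.16 - 1.4 * lb)), Qle_bool 0 sb, Qle_bool (b' + 1) (sb * sb),
      Qle_bool 0 p, Qle_bool p 1, Qle_bool 1 s, Qle_bool (q * (a1 + 1)) a1,
      Qle_bool (pow_up q a.+1) pw & Qle_bool ((1 - 2 * p + 2 * (a1 * pw)) * sb) (r + 0.25)]%Q.

Lemma cert_ok_sound (a b : nat) (p s la lb r sb pw : Q) :
  cert_ok (Cert a b p s la lb r sb pw) ->
  let q := (1 - Q2R p + Q2R p * (Q2R s * Q2R s)) / Q2R s in
  [/\ 0 <= Q2R p <= 1, 1 <= Q2R s, q * (INR a + 2) <= INR a + 1 &
    forall d, (a <= d <= b)%nat ->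
      1 - 2 * Q2R p + 2 * ((INR a + 1) * q ^ a.+1) <= gamma_bound d].
Proof.
move=> /and5P[a_gt0 /RMicromega.Qle_true la_ok /RMicromega.Qle_true lb_ok
  /RMicromega.Qle_true la_ge0 /and5P[/RMicromega.Qle_true c_ge0 /RMicromega.Qle_true r_ge0
  /RMicromega.Qle_true r2_le /RMicromega.Qle_true sb_ge0 /and5P[/RMicromega.Qle_true sb2_ge
  /RMicromega.Qle_true p_ge0 /RMicromega.Qle_true p_le1 /RMicromega.Qle_true s_ge1
  /and3P[/RMicromega.Qle_true q_le /RMicromega.Qle_true pw_ge /RMicromega.Qle_true K_le]]]] q.
have s_neq0 : ~ (s == 0)%Q.
  by move=> /Qeq_eqR s0; move: s_ge1; rewrite s0 RMicromega.Q2R_0 RMicromega.Q2R_1; lra.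
have Q2R_q : Q2R ((1 - p + p * (s * s)) / s) = q.
  by rewrite Q2R_div // Q2R_plus Q2R_minus !Q2R_mult RMicromega.Q2R_1.
rewrite ?(Q2R_q, Q2R_plus, Q2R_minus, Q2R_mult, Q2R_of_nat, RMicromega.Q2R_0, RMicromega.Q2R_1)
  in la_ok lb_ok la_ge0 c_ge0 r_ge0 r2_le sb_ge0 sb2_ge p_ge0 p_le1 s_ge1 q_le K_le.
have q_ge0 : 0 <= q.
  by apply: Rmult_le_pos; [nra | apply/Rlt_le/Rinv_0_lt_compat; lra].
have qpow_le : q ^ a.+1 <= Q2R pw.
  by rewrite -Q2R_q; apply: Rle_trans (pow_up_ge _ _) pw_ge; rewrite Q2R_q.
have a1_gt0 : 0 < INR a + 1 by have := pos_INR a; lra.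
split; [lra | lra | lra | move=> d /andP[ad db]].
have b_gt0 : 0 < INR b.
  by apply: lt_0_INR; apply/ssrnat.leP; apply: leq_trans db; apply: leq_trans ad.
apply: (le_gamma_bound (a := a) (b := b) (la := Q2R la) (lb := Q2R lb) (r := Q2R r)
  (sb := Q2R sb)) => //; first by rewrite a_gt0.
- exact: ln_ge_exp_lower.
- by apply: ln_le_exp_lower; rewrite // -Q2R_of_nat.
apply: Rle_trans K_le; rewrite Q2R_2; apply: Rmult_le_compat_r => //.
have := Rmult_le_compat_l _ _ _ (Rlt_le _ _ a1_gt0) qpow_le; lra.
Qed.

Definition certs : seq cert := [::
  Cert 230 375 (76161 # 250000) (1511 # 1000) (340151 # 62500) (370433 # 62500)
    (7326303 # 1000000) (19390721 # 1000000) (4908073 # 1000000000000000);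
  Cert 376 589 (42817 # 125000) (277 # 200) (1483061 # 250000) (1594607 # 250000)
    (1479943 # 200000) (24289917 # 1000000) (2813889 # 1000000000000000);
  Cert 590 894 (371677 # 1000000) (13 # 10) (1276363 # 200000) (6795707 # 1000000)
    (7428137 # 1000000) (3739569 # 125000) (901001 # 500000000000000);
  Cert 895 1000 (375999 # 1000000) (161 # 125) (6797939 # 1000000) (6907757 # 1000000)
    (379831 # 50000) (15819293 # 500000) (7 # 15625000000000)].

Lemma certs_ok : all cert_ok certs.
Proof. by vm_compute. Qed.

Lemma certs_cover (d : nat) :
  (230 <= d <= 1000)%nat -> has (fun c => cert_lo c <= d <= cert_hi c)%nat certs.
Proof. by move=> /andP[lo hi] /=; lia. Qed.

End CertifiedBounds.

Module RealBridge.
Import Rstruct Reals Lra CertifiedBounds.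
Local Open Scope ring_scope.

Lemma int_to_RE (g : int) : int_to_R g = (g%:~R : R).
Proof. by case: g => n; rewrite /int_to_R INRE // NegzE mulrNz. Qed.

Lemma signed_dom_number_le_bernoulli_R (T : finType) (e : rel T) (g : int) (a : nat)
    (p s : R) :
  simple_graph e -> is_signed_dom_number e g -> (forall v, a <= degree e v)%nat ->
  (0 <= p <= 1)%R -> (1 <= s)%R ->
  ((1 - p + p * (s * s)) / s * (INR a + 2) <= INR a + 1)%R ->
  (int_to_R g <=
     INR #|T| * (1 - 2 * p + 2 * ((INR a + 1) * ((1 - p + p * (s * s)) / s) ^ a.+1)))%R.
Proof.
move=> e_simple sdn deg_ge [p_ge0 p_le1] s_ge1 q_le.
have INR_a1 : (INR a + 1)%R = a.+1%:R by rewrite -INRE S_INR.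
have INR_a2 : (INR a + 2)%R = a.+2%:R by rewrite -INRE !S_INR; lra.
rewrite INR_a1 INR_a2 int_to_RE in q_le *.
apply/RleP; move/RleP: q_le.
rewrite !RealsE -!expr2 (_ : nat_of_pos 2 = 2%N) // => q_le.
apply: (signed_dom_number_le_bernoulli e_simple sdn deg_ge) q_le.
  by apply/andP; split; apply/RleP.
exact/RleP.
Qed.

Lemma signed_dom_number_le_gamma_bound (c : cert) (T : finType) (e : rel T)
    (delta : nat) (g : int) :
  cert_ok c -> simple_graph e -> (forall v, delta <= degree e v)%nat ->
  (cert_lo c <= delta <= cert_hi c)%nat -> is_signed_dom_number e g ->
  (int_to_R g <= gamma_bound delta * INR #|T|)%R.
Proof.
case: c => a b p s la lb r sb pw /cert_ok_sound[p01 s_ge1 q_le K_le].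
move=> e_simple deg_ge range sdn.
have deg_a v : (a <= degree e v)%nat by apply: leq_trans (deg_ge v); case/andP: range.
rewrite Rmult_comm.
apply: Rle_trans (signed_dom_number_le_bernoulli_R e_simple sdn deg_a p01 s_ge1 q_le) _.
by apply: Rmult_le_compat_l; [apply: pos_INR | apply: K_le].
Qed.

End RealBridge.

From Stdlib Require Import Reals.
Import CertifiedBounds RealBridge.

Theorem corollary3 (T : finType) (e : rel T) (delta : nat) (g : int) :
  simple_graph e ->
  is_min_degree e delta ->
  (230 <= delta <= 1000)%N ->
  is_signed_dom_number e g ->
  (int_to_R g <=
     (sqrt (ln (INR delta + 1) * (18.16 - 1.4 * ln (INR delta))) + 0.25)
       / sqrt (INR delta + 1) * INR #|T|)%R.
Proof.
move=> e_simple [_ deg_ge] /certs_cover/(all_has_witness certs_ok)[c c_ok c_range] sdn.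
exact: signed_dom_number_le_gamma_bound c_ok e_simple deg_ge c_range sdn.
Qed.
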